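(* Let $d$ be a premetric on a topological space $X$. Then (1) the regularization $\overline d$ is a premetric with closed balls on $X$; (2) if $d$ has open balls, then the semiregularization $\overline d^\circ$ is a premetric with open balls on $X$.
   Context: A premetric on $X$ is $d:X\times X\to[0,\infty)$ with $d(x,x)=0$. $B_d(x,\varepsilon)=\{y:d(x,y)<\varepsilon\}$; $d$ has open balls if every $B_d(x,\varepsilon)$ is open, closed balls if every $\{y:d(x,y)\le\varepsilon\}$ is closed. The regularization is $\overline d(x,y)=\inf\{\varepsilon>0:y\in\overline{B_d(x,\varepsilon)}\}$ and the semiregularization is $\overline d^\circ(x,y)=\inf\{\varepsilon>0:y\in B_d(x,\varepsilon)\cup\mathrm{int}\,\overline{B_d(x,\varepsilon)}\}$. *)

From HB Require Import structures.
From mathcomp Require Import all_boot all_order all_algebra.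
From mathcomp Require Import all_classical all_reals topology.
Set Implicit Arguments. Unset Strict Implicit. Unset Printing Implicit Defensive.
Import Order.TTheory GRing.Theory Num.Theory.
Local Open Scope classical_set_scope.
Local Open Scope ring_scope.

Definition premetric (X : Type) (R : realType) (d : X -> X -> R) : Prop :=
  (forall x y, 0 <= d x y) /\ (forall x, d x x = 0).

Definition pball (X : Type) (R : realType) (d : X -> X -> R) (x : X) (e : R)
  : set X := [set y | d x y < e].

Definition has_open_balls (X : topologicalType) (R : realType)
  (d : X -> X -> R) : Prop :=
  forall (x : X) (e : R), open (pball d x e).

Definition has_closed_balls (X : topologicalType) (R : realType)
  (d : X -> X -> R) : Prop :=
  forall (x : X) (e : R), closed [set y | d x y <= e].

Definition regularization (X : topologicalType) (R : realType)
  (d : X -> X -> R) (x y : X) : R :=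
  inf [set e : R | 0 < e /\ closure (pball d x e) y].

Definition semiregularization (X : topologicalType) (R : realType)
  (d : X -> X -> R) (x y : X) : R :=
  inf [set e : R | 0 < e /\
        (pball d x e `|` interior (closure (pball d x e))) y].

(** Both regularizations are instances of one construction: given sets
    [B x e] containing the balls [B_d(x, e)], put
    [rho x y := inf {e > 0 | y \in B x e}].  The ball [{y | rho x y < e}] is the
    union of the [B x e'] with [0 < e' < e], and when [B x e] grows with [e] the
    sublevel set [{y | rho x y <= e}] is the intersection of the [B x e'] with
    [e' > e].  Hence [rho] has open balls when every [B x e] is open and closed
    balls when every [B x e] is closed: closures of balls are closed, and
    [B_d(x, e)] together with the interior of its closure is open as soon as
    [d] has open balls. *)
From mathcomp Require Import all_boot all_order all_algebra.
From mathcomp Require Import all_classical all_reals topology.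
From mathcomp Require Import unstable.
Import Order.TTheory GRing.Theory Num.Theory.
Local Open Scope classical_set_scope.
Local Open Scope ring_scope.

Definition inf_radius {X : Type} {R : realType} (B : X -> R -> set X)
    (x y : X) : R :=
  inf [set e : R | 0 < e /\ B x e y].

Lemma pball_le {X : Type} {R : realType} (d : X -> X -> R) (x : X) (a b : R) :
  a <= b -> pball d x a `<=` pball d x b.
Proof. by move=> ab y /= dxy; exact: lt_le_trans ab. Qed.

Section InfRadius.
Context {X : topologicalType} {R : realType} {d : X -> X -> R}.
Context {B : X -> R -> set X}.
Hypothesis d_premetric : premetric d.
Hypothesis B_le : forall x a b, a <= b -> B x a `<=` B x b.
Hypothesis pball_sub : forall x e, pball d x e `<=` B x e.

Let radii x y := [set e : R | 0 < e /\ B x e y].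

Let radii_neq0 x y : radii x y !=set0.
Proof.
exists (d x y + 1); split; first by rewrite ltr_wpDl // d_premetric.1.
by apply: pball_sub; rewrite /pball /= ltrDl.
Qed.

Let radii_lbound x y : has_lbound (radii x y).
Proof. by exists 0 => e [/ltW]. Qed.

Lemma inf_radius_ge0 x y : 0 <= inf_radius B x y.
Proof. by apply: lb_le_inf; [exact: radii_neq0 | move=> e [/ltW]]. Qed.

Lemma inf_radius_le {x y e} : 0 < e -> B x e y -> inf_radius B x y <= e.
Proof. by move=> e0 Bxe; exact: (ge_inf (radii_lbound x y)). Qed.

Lemma inf_radius_ltP x y e :
  inf_radius B x y < e <-> exists2 e', 0 < e' < e & B x e' y.
Proof.
split=> [/(inf_lt (radii_neq0 x y)) [e' [e'0 Bxe'] e'e]|[e' /andP[e'0 e'e] Bxe']].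
  by exists e' => //; rewrite e'0.
exact: le_lt_trans (inf_radius_le e'0 Bxe') e'e.
Qed.

Lemma inf_radius_leP x y e : 0 <= e ->
  inf_radius B x y <= e <-> forall e', e < e' -> B x e' y.
Proof.
move=> e0; split=> [le_e e' ee'|Bxe]; last first.
  by apply/ler_gtP => e' ee'; apply: inf_radius_le (le_lt_trans e0 ee') (Bxe _ ee').
have [e'' /andP[_ e''e'] Bxe''] := (inf_radius_ltP x y e').1 (le_lt_trans le_e ee').
exact: B_le (ltW e''e') _ Bxe''.
Qed.

Lemma inf_radius_premetric : premetric (inf_radius B).
Proof.
split=> [x y|x]; first exact: inf_radius_ge0.
apply/eqP; rewrite eq_le inf_radius_ge0 andbT.
apply/ler_gtP => e e0; apply: (inf_radius_le e0).
by apply: pball_sub; rewrite /pball /= d_premetric.2.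
Qed.

Lemma inf_radius_closed_balls :
  (forall x e, closed (B x e)) -> has_closed_balls (inf_radius B).
Proof.
move=> B_closed x e; have [e_lt0|e_ge0] := ltP e 0.
  suff -> : [set y | inf_radius B x y <= e] = set0 by exact: closed0.
  apply/seteqP; split => // y /= le_e.
  by have := le_trans (inf_radius_ge0 x y) le_e; rewrite leNgt e_lt0.
suff -> : [set y | inf_radius B x y <= e] = \bigcap_(e' in `]e, +oo[) B x e'.
  by apply: closed_bigI => e' _; exact: B_closed.
apply/seteqP; split=> y /=.
  by move=> /(inf_radius_leP _ _ _ e_ge0) Bxe e'; rewrite /= in_itv /= andbT; exact: Bxe.
move=> Bxe; apply/(inf_radius_leP _ _ _ e_ge0) => e' ee'.
by apply: Bxe; rewrite /= in_itv /= ee'.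
Qed.

Lemma inf_radius_open_balls :
  (forall x e, open (B x e)) -> has_open_balls (inf_radius B).
Proof.
move=> B_open x e.
suff -> : pball (inf_radius B) x e = \bigcup_(e' in [set e' | 0 < e' < e]) B x e'.
  by apply: bigcup_open => e' _; exact: B_open.
by apply/seteqP; split=> y /inf_radius_ltP.
Qed.

End InfRadius.

Theorem proposition1p4 (X : topologicalType) (R : realType) (d : X -> X -> R) :
  premetric d ->
  (premetric (regularization d) /\ has_closed_balls (regularization d)) /\
  (has_open_balls d ->
     premetric (semiregularization d) /\
     has_open_balls (semiregularization d)).
Proof.
move=> d_premetric.
pose Bcl x e := closure (pball d x e).
pose Bsr x e := pball d x e `|` interior (Bcl x e).
have Bcl_le x a b : a <= b -> Bcl x a `<=` Bcl x b.
  by move=> ab; apply: closureS; exact: pball_le.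
have pball_Bcl x e : pball d x e `<=` Bcl x e by exact: subset_closure.
have pball_Bsr x e : pball d x e `<=` Bsr x e by move=> y; left.
have -> : regularization d = inf_radius Bcl by [].
have -> : semiregularization d = inf_radius Bsr by [].
split.
  split; first exact: inf_radius_premetric d_premetric pball_Bcl.
  apply: inf_radius_closed_balls d_premetric Bcl_le pball_Bcl _ => x e.
  exact: closed_closure.
move=> d_open; split; first exact: inf_radius_premetric d_premetric pball_Bsr.
apply: inf_radius_open_balls d_premetric pball_Bsr _ => x e.
by apply: openU; [exact: d_open | exact: open_interior].
Qed.
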